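(* Let $X$ be a semiprime Banach algebra with unit element $\mathbf{1}$. Let $\phi,\psi:X^2\to[0,\infty)$ and $f:X\to X$ with $f(0)=0$ satisfy $$\|f(xyx)-f(x)yx-xf(y)x-xyf(x)\|\le\psi(x,y),$$ $$\|f(2x+y)+f(x+2y)-f(3x)-f(3y)\|\le\phi(x,y)$$ for all $x,y\in X$. Assume there exists $0<L<1$ such that for all $x,y\in X$ $$\tfrac12\phi(2x,2y)\le L\phi(x,y),\qquad \lim_{k\to\infty}8^{-k}\psi(2^kx,2^ky)=0,\qquad \lim_{k\to\infty}4^{-k}\psi(2^kx,y)=0.$$ Then $f$ is a derivation.
   Context: An algebra $X$ is semiprime if $aXa=\{0\}$ for some $a\in X$ implies $a=0$. A derivation is an additive map $D:X\to X$ with $D(xy)=D(x)y+xD(y)$ for all $x,y\in X$. *)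

From HB Require Import structures.
From mathcomp Require Import all_boot all_order all_algebra.
From mathcomp Require Import all_classical all_reals all_analysis.
Set Implicit Arguments. Unset Strict Implicit. Unset Printing Implicit Defensive.
Import Order.TTheory GRing.Theory Num.Theory.
Import numFieldNormedType.Exports.
Local Open Scope ring_scope.

(* A (real) Banach algebra with unit element: a Banach space
   X : completeNormedModType R equipped with a multiplication [mul] and a
   unit element [one] making X an associative unital R-algebra whose norm
   is submultiplicative.  (MathComp's ring hierarchy cannot be joined with
   the normed-module hierarchy by HB, so the algebra structure is given
   explicitly.) *)
Record banach_algebra (R : realType) (X : completeNormedModType R)
    (mul : X -> X -> X) (one : X) : Prop := BanachAlgebra {
  ba_mulA  : forall x y z, mul x (mul y z) = mul (mul x y) z;
  ba_mul1l : forall x, mul one x = x;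
  ba_mul1r : forall x, mul x one = x;
  ba_mulDl : forall x y z, mul (x + y) z = mul x z + mul y z;
  ba_mulDr : forall x y z, mul x (y + z) = mul x y + mul x z;
  ba_scalerAl : forall (a : R) x y, mul (a *: x) y = a *: mul x y;
  ba_scalerAr : forall (a : R) x y, mul x (a *: y) = a *: mul x y;
  ba_normM : forall x y, `|mul x y| <= `|x| * `|y|
}.

Definition semiprime (R : realType) (X : completeNormedModType R)
    (mul : X -> X -> X) : Prop :=
  forall a : X, (forall x : X, mul (mul a x) a = 0) -> a = 0.

Definition derivation (R : realType) (X : completeNormedModType R)
    (mul : X -> X -> X) (D : X -> X) : Prop :=
  (forall x y, D (x + y) = D x + D y) /\
  (forall x y, D (mul x y) = mul (D x) y + mul x (D y)).

From HB Require Import structures.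
From mathcomp Require Import all_boot all_order all_algebra.
From mathcomp Require Import all_classical all_reals all_analysis.
From mathcomp Require Import ring lra.
Import Order.TTheory GRing.Theory Num.Theory.
Import numFieldNormedType.Exports.
Set Implicit Arguments. Unset Strict Implicit. Unset Printing Implicit Defensive.
Local Open Scope ring_scope.
Local Open Scope classical_set_scope.

(* Putting x := 2^k 1 in the psi-inequality and combining five instances of it,
   the unknown values f (2^k 1) cancel: 4^k times the defect of the equation
   f(2x+y) + f(x+2y) = f(3x) + f(3y) is bounded by phi(4^k x, 4^k y) plus four
   terms psi(2^k 1, z).  Dividing by 4^k and letting k -> oo, f satisfies this
   equation exactly, hence is additive.  Additivity makes the Jordan triple
   defect of f homogeneous of degree 2 in x, so the 4^-k condition on psi forces
   f(xyx) = f(x)yx + xf(y)x + xyf(x).  We conclude by Bresar's theorem: an additive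
   Jordan triple derivation d of a 2-torsion free semiprime ring is a derivation.
   There, the defect t = d(ab) - d(a)b - a d(b) satisfies t x [a,b] + [a,b] x t = 0;
   semiprimeness upgrades this to t x [c,e] = 0 for all c, e, so that t is central
   with t^3 = 0, whence t = 0. *)

Section TrivialExtension.
Variables (R : comNzRingType) (V : lmodType R).

Definition triv_ext : Type := (R * V)%type.
HB.instance Definition _ := GRing.Zmodule.on triv_ext.

Definition triv_ext_mul (p q : triv_ext) : triv_ext :=
  (p.1 * q.1, p.1 *: q.2 + q.1 *: p.2).

Fact triv_ext_mulA : associative triv_ext_mul.
Proof.
move=> [a u] [b v] [c w]; congr pair; rewrite /= ?mulrA //.
by rewrite !scalerDr !scalerA addrA (mulrC c a) (mulrC c b).
Qed.

Fact triv_ext_mulC : commutative triv_ext_mul.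
Proof. by move=> [a u] [b v]; rewrite /triv_ext_mul /= mulrC addrC. Qed.

Fact triv_ext_mul1 : left_id (1, 0) triv_ext_mul.
Proof. by move=> [a u]; rewrite /triv_ext_mul /= mul1r scale1r scaler0 addr0. Qed.

Fact triv_ext_mulDl : left_distributive triv_ext_mul +%R.
Proof.
move=> [a u] [b v] [c w]; congr pair; rewrite /= ?mulrDl //.
by rewrite scalerDl scalerDr addrACA.
Qed.

Fact triv_ext1_neq0 : (1, 0) != 0 :> triv_ext.
Proof. by apply/eqP => -[] /eqP; rewrite oner_eq0. Qed.

HB.instance Definition _ := GRing.Zmodule_isComNzRing.Build triv_ext
  triv_ext_mulA triv_ext_mulC triv_ext_mul1 triv_ext_mulDl triv_ext1_neq0.

Definition vec_te (v : V) : triv_ext := (0, v).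
Definition scal_te (r : R) : triv_ext := (r, 0).

Lemma vec_te_inj : injective vec_te. Proof. by move=> u v [->]. Qed.

Lemma vec_te0 : vec_te 0 = 0. Proof. by []. Qed.

Lemma vec_teD u v : vec_te (u + v) = vec_te u + vec_te v.
Proof. by congr pair; rewrite /= addr0. Qed.

Lemma vec_teN u : vec_te (- u) = - vec_te u.
Proof. by congr pair; rewrite /= oppr0. Qed.

Lemma vec_teZ r u : vec_te (r *: u) = scal_te r * vec_te u.
Proof. by congr pair; rewrite /= ?mulr0 // scale0r addr0. Qed.

Lemma scal_teM r s : scal_te (r * s) = scal_te r * scal_te s.
Proof. by congr pair; rewrite /= !scaler0 addr0. Qed.

Lemma scal_te_nat n : scal_te n%:R = n%:R.
Proof. by elim: n => // n IHn; rewrite !mulrS -IHn; congr pair; rewrite /= addr0. Qed.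
End TrivialExtension.

(* Linear identities between vectors, the vectors (and any non-linear
   subterms) being atoms: map them into the commutative ring [triv_ext],
   where [ring] decides them.  [zlin_ring] does so in any zmodType, viewed as
   a module over int. *)
Ltac lin_ring :=
  apply: vec_te_inj;
  rewrite ?(vec_teD, vec_teN, vec_te0, vec_teZ, scal_teM, scal_te_nat); ring.

Ltac zlin_ring :=
  lazymatch goal with |- @eq ?T _ _ =>
    apply: (@vec_te_inj int (zmodule T)); rewrite ?(vec_teD, vec_teN, vec_te0); ring
  end.

(* Proves L = R from h : l = r when [tac] proves L - R = l - r or L - R = r - l. *)
Ltac lin_comb_with tac h :=
  lazymatch type of h with ?l = ?r =>
    apply/eqP; rewrite -subr_eq0; apply/eqP;
    first [ transitivity (l - r); [tac | by apply/eqP; rewrite subr_eq0 (introT eqP h)]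
          | transitivity (r - l);
            [tac | by apply/eqP; rewrite subr_eq0 eq_sym (introT eqP h)] ]
  end.

Section SemiprimeRing.
Variable A : pzRingType.
Hypothesis A_semiprime : forall a : A, (forall x, a * x * a = 0) -> a = 0.
Hypothesis A_2torsionfree : forall a : A, a *+ 2 = 0 -> a = 0.

Let expandE := (mulrDl, mulrDr, mulrN, mulNr, mulrA, mul0r, mulr0, mul1r, mulr1).

Lemma semiprime_anticomm_ann (a b : A) :
  (forall z, a * z * b + b * z * a = 0) -> forall x, a * x * b = 0.
Proof.
move=> ab_anti x; apply: A_semiprime => y; apply: A_2torsionfree.
pose s z := a * z * b + b * z * a.
transitivity (a * x * s y * x * b - s (x * a * y) * x * b + b * x * a * y * s x
  - s x * y * (b * x * a) + a * x * b * y * s x).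
  by rewrite /s ?expandE mulr2n; zlin_ring.
by rewrite /s !ab_anti !(mul0r, mulr0, subr0, addr0).
Qed.

Lemma semiprime_central_sqr_eq0 (z : A) :
  (forall x, z * x = x * z) -> z * z = 0 -> z = 0.
Proof. by move=> zC zz; apply: A_semiprime => x; rewrite -mulrA -zC mulrA zz mul0r. Qed.

Lemma semiprime_ann_cross {T : zmodType} {u v : T -> A} :
    {morph u : s t / s + t} -> {morph v : s t / s + t} ->
    (forall s x, u s * x * v s = 0) -> (forall s x, v s * x * u s = 0) ->
  forall s t x, u s * x * v t = 0.
Proof.
move=> uD vD uv vu s t x.
have uvst : u s * x * v t = - (u t * x * v s).
  apply/eqP; rewrite -addr_eq0; apply/eqP; have := uv (s + t) x.
  by rewrite uD vD !(mulrDl, mulrDr) !uv add0r addr0 addrC.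
apply: A_semiprime => y; rewrite {1}uvst !mulNr.
have -> : u t * x * v s * y * (u s * x * v t) = u t * x * (v s * y * u s) * x * v t.
  by rewrite !mulrA.
by rewrite vu mulr0 !mul0r oppr0.
Qed.

Section JordanTripleDerivation.
Variable d : A -> A.
Hypothesis dD : {morph d : x y / x + y}.
Hypothesis dT : forall x y, d (x * y * x) = d x * y * x + x * d y * x + x * y * d x.

Lemma jtder0 : d 0 = 0.
Proof. by apply: (addrI (d 0)); rewrite -dD !addr0. Qed.

Lemma jtderN x : d (- x) = - d x.
Proof. by apply: (addrI (d x)); rewrite -dD !subrr jtder0. Qed.

Let dexpandE := (expandE, dD, jtderN, jtder0).

Lemma jtder1 : d 1 = 0.
Proof.
have d1_triple := dT 1 1; rewrite !mul1r !mulr1 in d1_triple.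
apply: A_2torsionfree; apply: (addrI (d 1)).
by rewrite mulr2n addrA -d1_triple addr0.
Qed.

Lemma jtder_sqr x : d (x * x) = d x * x + x * d x.
Proof. by have := dT x 1; rewrite jtder1 !mulr1 mulr0 mul0r addr0. Qed.

Lemma jtder_jordan_prod a b :
  d (a * b + b * a) = d a * b + a * d b + d b * a + b * d a.
Proof.
have h := jtder_sqr (a + b); rewrite ?dexpandE !jtder_sqr in h.
lin_comb_with ltac:(rewrite ?dexpandE; zlin_ring) h.
Qed.

Lemma jtder_lin_triple x y z : d (x * y * z + z * y * x) =
  d x * y * z + x * d y * z + x * y * d z + d z * y * x + z * d y * x + z * y * d x.
Proof.
have h := dT (x + z) y; rewrite ?dexpandE !dT in h.
lin_comb_with ltac:(rewrite ?dexpandE; zlin_ring) h.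
Qed.

(* Locked, so that expanding products does not unfold them. *)
Fact der_defect_key : unit. Proof. by []. Qed.
Definition der_defect :=
  locked_with der_defect_key (fun a b => d (a * b) - d a * b - a * d b).

Lemma der_defectE a b : der_defect a b = d (a * b) - d a * b - a * d b.
Proof. by rewrite [der_defect]unlock. Qed.

Fact lie_key : unit. Proof. by []. Qed.
Definition lie := locked_with lie_key (fun a b : A => a * b - b * a).

Lemma lieE a b : lie a b = a * b - b * a.
Proof. by rewrite [lie]unlock. Qed.

Lemma der_defectDl b : {morph der_defect^~ b : a c / a + c}.
Proof. by move=> a c; rewrite !der_defectE ?dexpandE; zlin_ring. Qed.

Lemma der_defectDr a : {morph der_defect a : b c / b + c}.
Proof. by move=> b c; rewrite !der_defectE ?dexpandE; zlin_ring. Qed.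

Lemma lieDl b : {morph lie^~ b : a c / a + c}.
Proof. by move=> a c; rewrite !lieE ?expandE; zlin_ring. Qed.

Lemma lieDr a : {morph lie a : b c / b + c}.
Proof. by move=> b c; rewrite !lieE ?expandE; zlin_ring. Qed.

(* Compute d (ab x ba + ba x ab) once as a linearized triple, once through
   a (b x b) a + b (a x a) b. *)
Lemma der_defect_lie_anticomm a b x :
  der_defect a b * x * lie a b + lie a b * x * der_defect a b = 0.
Proof.
have dba : d (b * a) = d a * b + a * d b + d b * a + b * d a - d (a * b).
  by rewrite -jtder_jordan_prod dD addrAC subrr add0r.
have dbxb := dT a (b * x * b); rewrite (dT b x) ?dexpandE in dbxb.
have daxa := dT b (a * x * a); rewrite (dT a x) ?dexpandE in daxa.
have h := jtder_lin_triple (a * b) x (b * a).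
rewrite ?dexpandE dbxb daxa dba ?dexpandE in h.
rewrite der_defectE lieE; lin_comb_with ltac:(rewrite ?dexpandE; zlin_ring) h.
Qed.

Lemma der_defect_lie_ann a b c e x : der_defect a b * x * lie c e = 0.
Proof.
have tl a' b' x' : der_defect a' b' * x' * lie a' b' = 0.
  exact: semiprime_anticomm_ann (der_defect_lie_anticomm a' b') x'.
have lt a' b' x' : lie a' b' * x' * der_defect a' b' = 0.
  by apply: semiprime_anticomm_ann => z; rewrite addrC der_defect_lie_anticomm.
have tl1 a' c' b' x' : der_defect a' b' * x' * lie c' b' = 0.
  exact: (semiprime_ann_cross (der_defectDl b') (lieDl b') (tl^~ b') (lt^~ b')).
have lt1 a' c' b' x' : lie c' b' * x' * der_defect a' b' = 0.
  exact: (semiprime_ann_cross (lieDl b') (der_defectDl b') (lt^~ b') (tl^~ b')).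
exact: (semiprime_ann_cross (der_defectDr a) (lieDr c) (tl1 a c) (lt1 a c)).
Qed.

Lemma der_defect_central a b x : der_defect a b * x = x * der_defect a b.
Proof.
have ann w c e : der_defect a b * (w * lie c e) = 0.
  by rewrite mulrA der_defect_lie_ann.
apply/eqP; rewrite -subr_eq0; apply/eqP; rewrite -lieE; apply: A_semiprime => y.
by rewrite {1}lieE !mulrBl -!mulrA (mulrA x y) !ann mulr0 subrr.
Qed.

Lemma der_defect_eq0 a b : der_defect a b = 0.
Proof.
set t := der_defect a b; set l := lie a b.
have tl p q : t * lie p q = 0 by have := der_defect_lie_ann a b p q 1; rewrite mulr1.
have tC := der_defect_central a b.
have d_lie : d l = lie (d a) b + lie a (d b) + t *+ 2.
  have h := jtder_jordan_prod a b.
  rewrite /l /t !lieE der_defectE mulr2n.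
  lin_comb_with ltac:(rewrite ?dexpandE; zlin_ring) h.
have h := jtder_jordan_prod l t; rewrite -(tC l) tl addr0 jtder0 in h.
have tt_dl : t * t * d l = 0.
  apply: A_2torsionfree; rewrite mulr2n.
  transitivity (t * (d l * t + l * d t + d t * l + t * d l)); last by rewrite -h mulr0.
  by rewrite !mulrDr -(tC (d l)) !mulrA tl mul0r der_defect_lie_ann !addr0.
have ttt : t * t * t = 0.
  apply: A_2torsionfree; rewrite -mulrnAr.
  by move: tt_dl; rewrite d_lie !mulrDr -!mulrA !tl !mulr0 !add0r.
have ttC x : t * t * x = x * (t * t).
  by rewrite -mulrA (tC x) mulrA (tC x) -mulrA.
apply: (semiprime_central_sqr_eq0 tC); apply: (semiprime_central_sqr_eq0 ttC).
by rewrite mulrA ttt mul0r.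
Qed.

Theorem semiprime_jtder_der a b : d (a * b) = d a * b + a * d b.
Proof. by apply/eqP; rewrite -subr_eq0 opprD addrA -der_defectE der_defect_eq0. Qed.
End JordanTripleDerivation.
End SemiprimeRing.

Lemma lmod_2torsionfree (R : numFieldType) (V : lmodType R) (v : V) :
  v *+ 2 = 0 -> v = 0.
Proof. by move/eqP; rewrite -scaler_nat scaler_eq0 pnatr_eq0 => /eqP. Qed.

Lemma morph_add_natZ (R : pzRingType) (U V : lmodType R) (f : U -> V) :
  {morph f : x y / x + y} -> forall n z, f (n%:R *: z) = n%:R *: f z.
Proof.
move=> fD n z; have f0 : f 0 = 0 by apply: (addrI (f 0)); rewrite -fD !addr0.
by elim: n => [|n IHn]; rewrite ?scale0r ?f0 // -addn1 natrD !scalerDl fD IHn !scale1r.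
Qed.

Definition additive_fe_defect {R : pzRingType} {U V : lmodType R} (f : U -> V) (x y : U) :=
  f (2 *: x + y) + f (x + 2 *: y) - f (3 *: x) - f (3 *: y).

Section AdditiveFunctionalEquation.
Variables (R : numFieldType) (U V : lmodType R) (f : U -> V).
Hypothesis f0 : f 0 = 0.
Hypothesis f_fe : forall x y, additive_fe_defect f x y = 0.

Let fe x y : f (2 *: x + y) + f (x + 2 *: y) = f (3 *: x) + f (3 *: y).
Proof. by apply/eqP; rewrite -subr_eq0 opprD addrA; apply/eqP/f_fe. Qed.

Lemma fe_reflect a b : f a + f b = f (2 *: a - b) + f (2 *: b - a).
Proof.
have nz3 : (3 : R) != 0 by rewrite pnatr_eq0.
rewrite -[a](scalerKV nz3) -[b](scalerKV nz3).
set a' := 3^-1 *: a; set b' := 3^-1 *: b.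
have := fe (2 *: a' - b') (2 *: b' - a').
by congr (f _ + f _ = f _ + f _); lin_ring.
Qed.

Lemma fe_fN w : f (- w) = - f w.
Proof.
have f2N u : f (2 *: u) + f (- (2 *: u)) = 0.
  have := fe_reflect u 0; rewrite f0 addr0 scaler0 subr0 sub0r => fu.
  have := fe_reflect (- u) 0; rewrite f0 addr0 scaler0 subr0 sub0r opprK scalerN.
  move=> fNu; have h := congr2 +%R fu fNu; lin_comb_with ltac:(lin_ring) h.
have nz2 : (2 : R) != 0 by rewrite pnatr_eq0.
by apply/eqP; rewrite -addr_eq0 addrC -[w](scalerKV nz2) f2N.
Qed.

Lemma fe_f2Z w : f (2 *: w) = 2 *: f w.
Proof.
have h := fe_reflect w 0; rewrite f0 scaler0 subr0 sub0r fe_fN addr0 in h.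
lin_comb_with ltac:(lin_ring) h.
Qed.

Lemma fe_f3Z w : f (3 *: w) = 3 *: f w.
Proof.
have h := fe w 0; rewrite !scaler0 !addr0 f0 addr0 fe_f2Z in h.
lin_comb_with ltac:(lin_ring) h.
Qed.

Lemma fe_additive : {morph f : a b / a + b}.
Proof.
move=> a b; apply/eqP; rewrite -subr_eq0; apply/eqP; apply: lmod_2torsionfree.
have h1 := fe a (b - a); have h2 := fe b (a - b).
have e1 : 2 *: a + (b - a) = a + b by lin_ring.
have e2 : a + 2 *: (b - a) = 2 *: b - a by lin_ring.
have e3 : 2 *: b + (a - b) = a + b by lin_ring.
have e4 : b + 2 *: (a - b) = 2 *: a - b by lin_ring.
rewrite e1 e2 in h1; rewrite e3 e4 in h2.
rewrite !fe_f3Z -(opprB a b) fe_fN in h1; rewrite !fe_f3Z in h2.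
have h := congr2 +%R (congr2 +%R h1 h2) (fe_reflect a b).
rewrite mulr2n; lin_comb_with ltac:(lin_ring) h.
Qed.
End AdditiveFunctionalEquation.

Lemma eq0_norm_le_cvg0 {R : realType} {V : normedModType R} {v : V} {u : nat -> R} :
  (forall k, `|v| <= u k) -> u @ \oo --> 0 -> v = 0.
Proof.
move=> vu u0; apply/eqP/negPn/negP; rewrite -normr_gt0 => v_gt0.
have [N _ uN] := cvgr0_norm_lt u u0 _ v_gt0.
by have := vu N; have := ler_norm (u N); have := uN N (leqnn N); lra.
Qed.

Lemma doubling_contraction_iter {R : realFieldType} {V : lmodType R}
    {g : V -> V -> R} {L : R} :
    0 <= L -> (forall x y, g (2 *: x) (2 *: y) / 2 <= L * g x y) ->
  forall n x y, g (2 ^+ n *: x) (2 ^+ n *: y) <= (2 * L) ^+ n * g x y.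
Proof.
move=> L_ge0 gL; elim=> [|n IHn] x y; first by rewrite !scale1r mul1r.
rewrite !exprS -!scalerA -mulrA.
have := gL (2 ^+ n *: x) (2 ^+ n *: y).
have := ler_wpM2l (mulr_ge0 (ler0n _ 2) L_ge0) (IHn x y).
lra.
Qed.

Definition jtder_defect {V : zmodType} (mul : V -> V -> V) (f : V -> V) (x y : V) :=
  f (mul (mul x y) x) - mul (mul (f x) y) x - mul (mul x (f y)) x - mul (mul x y) (f x).

Section BanachAlgebra.
Variables (R : realType) (X : completeNormedModType R) (mul : X -> X -> X) (one : X).
Hypothesis BA : banach_algebra mul one.

Let bilinE := (ba_mulDl BA, ba_mulDr BA, ba_scalerAl BA, ba_scalerAr BA,
  ba_mul1l BA, ba_mul1r BA).

Lemma additive_fe_defect_sqrZ (f : X -> X) (c : R) x y :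
  (c * c) *: additive_fe_defect f x y =
    additive_fe_defect f ((c * c) *: x) ((c * c) *: y)
    - jtder_defect mul f (c *: one) (2 *: x + y)
    - jtder_defect mul f (c *: one) (x + 2 *: y)
    + jtder_defect mul f (c *: one) (3 *: x) + jtder_defect mul f (c *: one) (3 *: y).
Proof.
have sq z : mul (mul (c *: one) z) (c *: one) = (c * c) *: z.
  by rewrite ?bilinE scalerA.
rewrite /additive_fe_defect /jtder_defect !sq.
have -> : 2 *: ((c * c) *: x) + (c * c) *: y = (c * c) *: (2 *: x + y) by lin_ring.
have -> : (c * c) *: x + 2 *: ((c * c) *: y) = (c * c) *: (x + 2 *: y) by lin_ring.
have -> : 3 *: ((c * c) *: x) = (c * c) *: (3 *: x) by lin_ring.
have -> : 3 *: ((c * c) *: y) = (c * c) *: (3 *: y) by lin_ring.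
by rewrite ?bilinE; lin_ring.
Qed.

Lemma jtder_defect_natZ (f : X -> X) (n : nat) x y :
    (forall m z, f (m%:R *: z) = m%:R *: f z) ->
  jtder_defect mul f (n%:R *: x) y = (n%:R * n%:R) *: jtder_defect mul f x y.
Proof.
by move=> fZ; rewrite /jtder_defect fZ ?bilinE !fZ ?bilinE; lin_ring.
Qed.

Lemma jtder_defect_eq0 (psi : X -> X -> R) (f : X -> X) :
    (forall n z, f (n%:R *: z) = n%:R *: f z) ->
    (forall x y, `|jtder_defect mul f x y| <= psi x y) ->
    (forall x y, (fun k : nat => psi (2 ^+ k *: x) y / 4 ^+ k) @ \oo --> 0) ->
  forall x y, jtder_defect mul f x y = 0.
Proof.
move=> fZ psi_bound psi_lim x y; apply: eq0_norm_le_cvg0 (psi_lim x y) => k.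
have -> : (4 : R) ^+ k = (2 ^ k)%:R * (2 ^ k)%:R by rewrite -natrM -expnMn natrX.
rewrite ler_pdivlMr ?mulr_gt0 ?ltr0n ?expn_gt0 // mulrC.
rewrite -[X in X * _]ger0_norm ?mulr_ge0 ?ler0n // -normrZ -jtder_defect_natZ //.
by rewrite natrX psi_bound.
Qed.

Section Stability.
Variables (phi psi : X -> X -> R) (f : X -> X) (L : R).
Hypothesis psi_bound : forall x y, `|jtder_defect mul f x y| <= psi x y.
Hypothesis phi_bound : forall x y, `|additive_fe_defect f x y| <= phi x y.
Hypotheses (L_gt0 : 0 < L) (L_lt1 : L < 1).
Hypothesis phi_contr : forall x y, phi (2 *: x) (2 *: y) / 2 <= L * phi x y.
Hypothesis psi_lim : forall x y, (fun k : nat => psi (2 ^+ k *: x) y / 4 ^+ k) @ \oo --> 0.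

Lemma additive_fe_defect_eq0 x y : additive_fe_defect f x y = 0.
Proof.
pose p z k := psi (2 ^+ k *: one) z / 4 ^+ k.
apply: (@eq0_norm_le_cvg0 _ _ _ (fun k => (L * L) ^+ k * phi x y
  + p (2 *: x + y) k + p (x + 2 *: y) k + p (3 *: x) k + p (3 *: y) k)); last first.
  have LL_lt1 : `|L * L| < 1.
    by rewrite ger0_norm ?mulr_ge0 ?ltW //; have := L_gt0; have := L_lt1; nra.
  have phi_lim : (fun k => (L * L) ^+ k * phi x y) @ \oo --> 0.
    by rewrite -(mul0r (phi x y)); apply: cvgMr_tmp; exact: cvg_expr.
  have := cvgD (cvgD (cvgD (cvgD phi_lim (psi_lim one (2 *: x + y)))
    (psi_lim one (x + 2 *: y))) (psi_lim one (3 *: x))) (psi_lim one (3 *: y)).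
  by rewrite !addr0 => h; apply: h.
move=> k; set c : R := 2 ^+ k.
have cc_gt0 : 0 < c * c by rewrite mulr_gt0 ?exprn_gt0.
have four_k : 4 ^+ k = c * c by rewrite -exprMn -natrM.
have phi_k : phi ((c * c) *: x) ((c * c) *: y) <= (c * c) * ((L * L) ^+ k * phi x y).
  have := doubling_contraction_iter (ltW L_gt0) phi_contr (k + k) x y.
  rewrite !exprD exprMn -/c (_ : _ * _ * phi x y = c * c * ((L * L) ^+ k * phi x y)) //.
  by rewrite exprMn; ring.
have defect_k : (c * c) * `|additive_fe_defect f x y| <=
    phi ((c * c) *: x) ((c * c) *: y)
    + psi (c *: one) (2 *: x + y) + psi (c *: one) (x + 2 *: y)
    + psi (c *: one) (3 *: x) + psi (c *: one) (3 *: y).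
  rewrite -[X in X * _]ger0_norm ?(ltW cc_gt0) // -normrZ additive_fe_defect_sqrZ.
  set a := additive_fe_defect _ _ _; set b1 := jtder_defect _ _ _ (2 *: x + y).
  set b2 := jtder_defect _ _ _ (x + 2 *: y); set b3 := jtder_defect _ _ _ (3 *: x).
  set b4 := jtder_defect _ _ _ (3 *: y).
  have := phi_bound ((c * c) *: x) ((c * c) *: y).
  have := psi_bound (c *: one) (2 *: x + y); have := psi_bound (c *: one) (x + 2 *: y).
  have := psi_bound (c *: one) (3 *: x); have := psi_bound (c *: one) (3 *: y).
  have := ler_normD (a - b1 - b2 + b3) b4; have := ler_normD (a - b1 - b2) b3.
  have := ler_normB (a - b1) b2; have := ler_normB a b1.
  lra.
rewrite -(ler_pM2l cc_gt0) /p four_k !mulrDr !(mulrC (c * c) (psi _ _ / _)).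
by rewrite !divfK ?gt_eqF //; lra.
Qed.
End Stability.

Definition balg of banach_algebra mul one : Type := X.
HB.instance Definition _ := GRing.Zmodule.on (balg BA).
HB.instance Definition _ := GRing.Zmodule_isPzRing.Build (balg BA)
  (ba_mulA BA) (ba_mul1l BA) (ba_mul1r BA) (ba_mulDl BA) (ba_mulDr BA).

Lemma semiprime_banach_jtder_der (d : X -> X) :
    semiprime mul -> {morph d : x y / x + y} ->
    (forall x y, jtder_defect mul d x y = 0) ->
  derivation mul d.
Proof.
move=> mul_semiprime dD d_jt; split=> // a b.
pose dA : balg BA -> balg BA := d.
have dA_jt x y : dA (x * y * x) = dA x * y * x + x * dA y * x + x * y * dA x.
  by apply/eqP; rewrite -subr_eq0 !opprD !addrA; apply/eqP/d_jt.
exact: (@semiprime_jtder_der (balg BA) mul_semiprime (@lmod_2torsionfree _ X) dA dD dA_jt).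
Qed.
End BanachAlgebra.

Theorem theorem2p7 (R : realType) (X : completeNormedModType R)
  (mul : X -> X -> X) (one : X)
  (phi psi : X -> X -> R) (f : X -> X) :
  banach_algebra mul one ->
  semiprime mul ->
  (forall x y, 0 <= phi x y) -> (forall x y, 0 <= psi x y) ->
  f 0 = 0 ->
  (forall x y,
     `|f (mul (mul x y) x) - mul (mul (f x) y) x - mul (mul x (f y)) x
         - mul (mul x y) (f x)| <= psi x y) ->
  (forall x y, `|f (2 *: x + y) + f (x + 2 *: y) - f (3 *: x) - f (3 *: y)|
                 <= phi x y) ->
  (exists L : R, 0 < L < 1 /\
     forall x y : X,
       [/\ phi (2 *: x) (2 *: y) / 2 <= L * phi x y,
           (fun k : nat => psi (2 ^+ k *: x) (2 ^+ k *: y) / 8 ^+ k) @ \oo --> 0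
         & (fun k : nat => psi (2 ^+ k *: x) y / 4 ^+ k) @ \oo --> 0]) ->
  derivation mul f.
Proof.
move=> BA mul_semiprime _ _ f0 psi_bound phi_bound [L [/andP[L_gt0 L_lt1] L_ctrl]].
have phi_contr x y : phi (2 *: x) (2 *: y) / 2 <= L * phi x y by case: (L_ctrl x y).
have psi_lim x y : (fun k : nat => psi (2 ^+ k *: x) y / 4 ^+ k) @ \oo --> 0.
  by case: (L_ctrl x y).
have f_fe := additive_fe_defect_eq0 BA psi_bound phi_bound L_gt0 L_lt1 phi_contr psi_lim.
have fD := fe_additive f0 f_fe.
have f_jt := jtder_defect_eq0 BA (morph_add_natZ fD) psi_bound psi_lim.
exact: (semiprime_banach_jtder_der BA mul_semiprime fD) f_jt.
Qed.
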